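(* Let $r\ge 2$ and $t\ge1$ be integers and let $m$ be a positive integer with $t\le 2^m-1$. Let $\mathcal C_t^{(m)}$ be the binary linear code, with coordinates indexed by $\Omega_t^{(m)}$, having parity-check matrix $H_t^{(m)}$. Then $\mathcal C_t^{(m)}$ is an $(n,k,r,t)$-SLRC with $$n=r^m\sum_{s=0}^t\frac{1}{r^{|\mathrm{supp}_m(s)|}},\qquad k=r^m,$$ so that its rate is $\frac{k}{n}=\Big(\sum_{s=0}^t r^{-|\mathrm{supp}_m(s)|}\Big)^{-1}$.
   Context: Let $\mathbb Z_r=\{0,1,\dots,r-1\}$ and $\mathbb Z_{r+1}=\{0,1,\dots,r\}$, regarded merely as sets (so $\mathbb Z_r\subseteq\mathbb Z_{r+1}$). Elements of $\mathbb Z_{r+1}^m$ are written $\alpha=(i_m,i_{m-1},\dots,i_1)$; $i_\ell$ is the $\ell$-th coordinate from the right. Define $\mathbf U(\alpha)=\{\ell\in[m]: i_\ell=r\}$, $\mathbf T(\alpha)=\{\ell\in[m]: i_\ell\in\mathbb Z_r\}$ and $\mathcal L(\alpha)=\{(j_m,\dots,j_1)\in\mathbb Z_r^m: j_\ell=i_\ell \text{ for all }\ell\in\mathbf T(\alpha)\}$. For an integer $0\le s\le 2^m-1$ write $s=\sum_{\ell=1}^m\lambda_\ell2^{\ell-1}$ with $\lambda_\ell\in\{0,1\}$ and set $\mathrm{supp}_m(s)=\{\ell:\lambda_\ell=1\}$. Let $\Gamma_s^{(m)}=\{\alpha\in\mathbb Z_{r+1}^m:\mathbf U(\alpha)=\mathrm{supp}_m(s)\}$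 and $\Omega_s^{(m)}=\bigcup_{\ell=0}^s\Gamma_\ell^{(m)}$ (so $\Omega_0^{(m)}=\mathbb Z_r^m$). $H_t^{(m)}=(h_{\alpha,\beta})$ is the binary matrix with rows indexed by $\Omega_t^{(m)}\setminus\Omega_0^{(m)}$, columns indexed by $\Omega_t^{(m)}$, and $h_{\alpha,\beta}=1$ if $\beta\in\mathcal L(\alpha)\cup\{\alpha\}$, $h_{\alpha,\beta}=0$ otherwise. For a linear code $\mathcal C$ of length $n$ over a field $\mathbb F$ with coordinate set $I$ ($|I|=n$), a recovering set of a coordinate $i$ is a set $R\subseteq I\setminus\{i\}$ such that there are nonzero $a_j\in\mathbb F$ ($j\in R$) with $x_i=\sum_{j\in R}a_jx_j$ for all codewords $x$. $\mathcal C$ (of dimension $k$) is an $(n,k,r,t)$-SLRC if for every $E\subseteq I$ with $|E|\le t$, $E$ can be indexed as $\{i_1,\dots,i_{|E|}\}$ such that each $i_\ell$ has a recovering set $R_\ell\subseteq(I\setminus E)\cup\{i_1,\dots,i_{\ell-1}\}$ with $|R_\ell|\le r$. *)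

From HB Require Import structures.
From mathcomp Require Import all_boot all_order all_algebra.
Set Implicit Arguments. Unset Strict Implicit. Unset Printing Implicit Defensive.
Import Order.TTheory GRing.Theory Num.Theory.
Local Open Scope ring_scope.

Definition recovering_set (F : fieldType) (I : finType)
    (C : {vspace {ffun I -> F^o}}) (i : I) (R : {set I}) : Prop :=
  i \notin R /\
  exists a : I -> F, (forall j, j \in R -> a j != 0) /\
    (forall x : {ffun I -> F^o}, x \in C -> x i = \sum_(j in R) a j * x j).

Definition seq_recoverable (F : fieldType) (I : finType)
    (C : {vspace {ffun I -> F^o}}) (r t : nat) : Prop :=
  forall E : {set I}, (#|E| <= t)%N ->
    exists s : seq I, [/\ uniq s, s =i E &
      forall (s1 s2 : seq I) (i : I), s = s1 ++ i :: s2 ->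
        exists R : {set I},
          [/\ R \subset (~: E) :|: [set x in s1], (#|R| <= r)%N &
              recovering_set C i R]].

Definition is_SLRC (F : fieldType) (I : finType)
    (C : {vspace {ffun I -> F^o}}) (n k r t : nat) : Prop :=
  [/\ #|I| = n, \dim C = k & seq_recoverable C r t].

(* Z_{r+1}^m : alpha = (i_m, ..., i_1) is represented as alpha : 'I_m -> 'I_(r+1)
   with alpha (l-1) = i_l. The value r is ord_max. *)
Definition word (m r : nat) := {ffun 'I_m -> 'I_r.+1}.

(* U(alpha) (shifted by one: l-1 in U alpha iff i_l = r) *)
Definition Uset m r (a : word m r) : {set 'I_m} := [set l | a l == ord_max].
Definition Tset m r (a : word m r) : {set 'I_m} := [set l | a l != ord_max].

Definition Lset m r (a : word m r) : {set word m r} :=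
  [set b : word m r | [forall l, b l != ord_max] &&
                      [forall l in Tset a, b l == a l]].

(* supp_m(s) (shifted: l-1 in supp s iff lambda_l = 1) *)
Definition supp m (s : nat) : {set 'I_m} := [set l : 'I_m | odd (s %/ 2 ^ l)].

Definition Gamma m r (s : nat) : {set word m r} := [set a | Uset a == supp m s].
Definition Omega m r (t : nat) : {set word m r} := \bigcup_(s < t.+1) Gamma m r s.

Notation GF2 := 'F_2.
Definition coord m r t := {a : word m r | a \in Omega m r t}.

Definition Hmat m r t (a b : word m r) : 'F_2 :=
  if (a \in Omega m r t :\: Omega m r 0) && (b \in Omega m r t) &&
     ((b \in Lset a) || (b == a)) then 1 else 0.

(* the code C_t^(m): kernel of H_t^(m), i.e. the x in F_2^(Omega_t) with
   sum_beta h_(alpha,beta) x_beta = 0 for every row alpha in Omega_t \ Omega_0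
   (for alpha in Omega_0 the map below gives 0 since Hmat vanishes there). *)
Definition syndrome m r t (x : {ffun coord m r t -> GF2^o}) : {ffun coord m r t -> GF2^o} :=
  [ffun a : coord m r t =>
     (\sum_(b : coord m r t) @Hmat m r t (val a) (val b) * x b : GF2^o)].

Definition Ccode m r t : {vspace {ffun coord m r t -> GF2^o}} :=
  lker (linfun (@syndrome m r t)).

From Pilot Require Import Defs.
From HB Require Import structures.
From mathcomp Require Import all_boot all_order all_algebra.
From mathcomp Require Import zify.
Import Order.TTheory GRing.Theory Num.Theory.
Set Implicit Arguments. Unset Strict Implicit. Unset Printing Implicit Defensive.

(* A codeword is determined by its entries on Omega_0 = Z_r^m, since the check of
   row alpha reads x_alpha = sum_(beta in L(alpha)) x_beta; so extension from Omega_0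
   is a linear bijection onto the code, k = r^m and n = |Omega_t|.  Reading U(alpha)
   as the binary number sum_(l in U(alpha)) 2^l (its weight), Omega_t is the set of
   words of weight at most t.  If putting the letter r at position l of p gives a word
   of Omega_t, the whole line {p[l := j] | j <= r} lies in Omega_t, and the check of
   p[l := r] splits, along the letter at l, into the checks of the other points of the
   line: the line sums to 0 in every codeword, and p is recovered from its r other
   points.  Sequential recovery rests on a counting fact: a nonempty set of words of
   weight at most t that meets again every such line through each of its points has
   more than t elements.  Hence every erasure set of size at most t has a point whose
   line misses the rest of the set; recover that point first and induct. *)

Lemma sum_bits n s : s < 2 ^ n -> \sum_(l < n | odd (s %/ 2 ^ l)) 2 ^ l = s.
Proof.
elim: n s => [|n IH] s; first by rewrite expn0 ltnS leqn0 big_ord0 => /eqP->.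
rewrite expnS => hs; rewrite big_mkcond big_ord_recl /= -big_mkcond /=.
under eq_bigl => l do rewrite /bump /= add1n expnS divnMA divn2.
under eq_bigr => l _ do rewrite /bump /= add1n expnS.
rewrite -big_distrr /= IH; last by rewrite -divn2 ltn_divLR // mulnC.
by rewrite expn0 divn1 -[RHS]odd_double_half mul2n; case: (odd s).
Qed.

Section Binary.

Variable m : nat.

Definition setval (S : {set 'I_m}) : nat := \sum_(l in S) 2 ^ l.

Lemma setval_supp s : s < 2 ^ m -> setval (supp m s) = s.
Proof. by move=> hs; rewrite -[RHS](sum_bits hs); apply: eq_bigl => l; rewrite inE. Qed.

Lemma supp_onto (S : {set 'I_m}) : exists2 s, s < 2 ^ m & S = supp m s.
Proof.
have supp_inj : injective (fun s : 'I_(2 ^ m) => supp m s).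
  by move=> s1 s2 /(congr1 setval); rewrite !setval_supp // => /val_inj.
have card_sets : #|{set 'I_m}| <= #|'I_(2 ^ m)|.
  by rewrite -cardsT -powersetT card_powerset cardsT !card_ord.
have /codomP[s ->] := inj_card_onto supp_inj card_sets S.
by exists s.
Qed.

Lemma supp_setval S : supp m (setval S) = S.
Proof. by have [s hs ->] := supp_onto S; rewrite setval_supp. Qed.

End Binary.

Lemma seq_recoverable_of_peel (F : fieldType) (I : finType)
    (C : {vspace {ffun I -> F^o}}) r t :
  (forall E : {set I}, E != set0 -> #|E| <= t ->
     exists i (R : {set I}),
       [/\ i \in E, R \subset ~: E, #|R| <= r & recovering_set C i R]) ->
  seq_recoverable C r t.
Proof.
move=> peel E; have [n] := ubnP #|E|; elim: n E => // n IH E; rewrite ltnS => En Et.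
have [->|E0] := eqVneq E set0.
  by exists [::]; split=> // [x | [] //]; rewrite inE.
have [i [R [iE RE Rr iR]]] := peel E E0 Et.
have cardEi : #|E| = #|E :\ i|.+1 by rewrite (cardsD1 i E) iE.
have [||s [us sE hs]] := IH (E :\ i); first by rewrite -cardEi.
  by rewrite (leq_trans (leqnSn _)) // -cardEi.
exists (i :: s); split.
- by rewrite /= us sE !inE eqxx.
- by move=> x; rewrite inE sE !inE; case: eqVneq => // ->.
case=> [|y s1] s2 j /= [<- e].
  by exists R; split=> //; rewrite (subset_trans RE) ?subsetUl.
have [R' [R'E R'r jR']] := hs s1 s2 j e; exists R'; split=> //.
apply: subset_trans R'E _; apply/subsetP => x; rewrite !inE.
by case: eqVneq => [->|] //=; rewrite ?orbT.
Qed.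

Section Words.

Variables m r : nat.
Local Notation word := (word m r).
Local Notation star := (@ord_max r).

Definition weight k (p : word) : nat := \sum_(l < m) ((l < k) && (p l == star)) * 2 ^ l.

Lemma weight_full p : weight m p = setval (Uset p).
Proof.
rewrite /setval big_mkcond; apply: eq_bigr => l _.
by rewrite inE (ltn_ord l); case: (p l == star); [exact: mul1n | exact: mul0n].
Qed.

Lemma mem_Gamma s p : s < 2 ^ m -> (p \in Gamma m r s) = (weight m p == s).
Proof.
move=> hs; rewrite inE weight_full; apply/eqP/eqP => [->|<-].
  exact: setval_supp.
by rewrite supp_setval.
Qed.

Lemma mem_Omega t p : t < 2 ^ m -> (p \in Omega m r t) = (weight m p <= t).
Proof.
move=> ht; have sub_t s : s <= t -> s < 2 ^ m by move/leq_ltn_trans; apply.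
apply/bigcupP/idP => [[s _]|hp].
  by rewrite mem_Gamma ?(sub_t _ (ltn_ord s)) // => /eqP->; rewrite -ltnS.
by exists (Ordinal (hp : weight m p < t.+1)); rewrite ?mem_Gamma ?sub_t.
Qed.

Lemma mem_Omega0 p : (p \in Omega m r 0) = [forall l, p l != star].
Proof.
rewrite mem_Omega ?expn_gt0 // leqn0 /weight sum_nat_eq0; apply: eq_forallb => l.
by rewrite (ltn_ord l) muln_eq0 expn_eq0 orbF eqb0.
Qed.

Lemma Omega0_sub t : Omega m r 0 \subset Omega m r t.
Proof.
by apply/subsetP => p; rewrite /Omega big_ord1 => hp; apply/bigcupP; exists ord0.
Qed.

Lemma weightS k p (hk : k < m) :
  weight k.+1 p = weight k p + (p (Ordinal hk) == star) * 2 ^ k.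
Proof.
rewrite /weight (bigD1 (Ordinal hk)) //= [in RHS](bigD1 (Ordinal hk)) //=.
rewrite ltnSn ltnn /= mul0n add0n [RHS]addnC; congr (_ + _).
apply: eq_bigr => l hl; rewrite ltnS leq_eqVlt.
by have /negbTE-> : nat_of_ord l != k by apply: contra hl => /eqP e; apply/eqP/val_inj.
Qed.

Lemma weight_lt k p : k <= m -> weight k p < 2 ^ k.
Proof.
elim: k => [|k IH] hk; first by rewrite /weight big1.
rewrite (weightS p hk) expnS; have := IH (ltnW hk); case: (_ == _) => /=; lia.
Qed.

Definition set_letter (p : word) l j : word := [ffun i => if i == l then j else p i].

Definition line (p : word) l : {set word} := [set set_letter p l j | j : 'I_r.+1].

Lemma set_letter_at p l j : set_letter p l j l = j.
Proof. by rewrite ffunE eqxx. Qed.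

Lemma set_letter_id p l : set_letter p l (p l) = p.
Proof. by apply/ffunP => i; rewrite ffunE; case: eqP => [->|]. Qed.

Lemma set_letter_set_letter p l j j' :
  set_letter (set_letter p l j) l j' = set_letter p l j'.
Proof. by apply/ffunP => i; rewrite !ffunE; case: eqP. Qed.

Lemma mem_line p l q : (q \in line p l) = (q == set_letter p l (q l)).
Proof.
apply/imsetP/eqP => [[j _ ->]|e]; first by rewrite set_letter_at.
by exists (q l).
Qed.

Lemma mem_line_set_letter p l j : set_letter p l j \in line p l.
Proof. exact: imset_f. Qed.

Lemma line_eq p l q : q \in line p l -> q l = p l -> q = p.
Proof. by rewrite mem_line => /eqP {2}-> ->; rewrite set_letter_id. Qed.

Lemma line_off p l q i : q \in line p l -> i != l -> q i = p i.
Proof. by rewrite mem_line => /eqP-> il; rewrite ffunE (negbTE il). Qed.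

Lemma set_letter_inj p l : injective (set_letter p l).
Proof. by move=> j j' /(congr1 (fun q : word => q l)); rewrite !set_letter_at. Qed.

Lemma card_line p l : #|line p l| = r.+1.
Proof. by rewrite card_imset ?card_ord //; apply: set_letter_inj. Qed.

Lemma line_set_letter p l j : line (set_letter p l j) l = line p l.
Proof. by apply: eq_imset => j'; apply: set_letter_set_letter. Qed.

Lemma mem_line_self p l : p \in line p l.
Proof. by rewrite -{1}(set_letter_id p l) mem_line_set_letter. Qed.

Lemma weight_line k p l q : q \in line p l ->
  weight k p + ((l < k) && (q l == star)) * 2 ^ l =
  weight k q + ((l < k) && (p l == star)) * 2 ^ l.
Proof.
rewrite mem_line => /eqP {2}->; rewrite /weight (bigD1 l) //= [in RHS](bigD1 l) //=.
rewrite set_letter_at.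
under [in RHS]eq_bigr => i /negbTE il do rewrite ffunE il.
by rewrite addnAC [RHS]addnAC; congr (_ + _); exact: addnC.
Qed.

Lemma weight_line_le k p l q :
  q \in line p l -> weight k q <= weight k (set_letter p l star).
Proof.
rewrite -(line_set_letter p l star) => /(weight_line k); rewrite set_letter_at eqxx andbT.
case: (l < k) => /=; last by rewrite !mul0n !addn0 => ->.
by set c := _ * _; lia.
Qed.

Definition line_closed k t (W : {set word}) :=
  forall p, p \in W -> forall l : 'I_m, l < k -> weight k (set_letter p l star) <= t ->
  exists2 q, q \in W & (q != p) && (q \in line p l).

Definition slice (W : {set word}) l j := [set p in W | p l == j].

Lemma line_closed_le k t t' (W : {set word}) :
  t' <= t -> line_closed k t W -> line_closed k t' W.
Proof. by move=> le_t hW p pW l lk /leq_trans/(_ le_t); apply: hW. Qed.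

Lemma card_slices (W : {set word}) l j j' :
  j != j' -> #|slice W l j| + #|slice W l j'| <= #|W|.
Proof.
move=> jj'; have disj : [disjoint slice W l j & slice W l j'].
  apply/pred0P => p /=; rewrite !inE; apply/negP => /andP[/andP[_ /eqP->] /andP[_]].
  exact/negP.
move: disj; rewrite -(leq_card_setU _ _).2 => /eqP <-; rewrite subset_leq_card //.
by apply/subsetP => p; rewrite !inE => /orP[]/andP[].
Qed.

Lemma slice_line_closed k (hk : k < m) t (W : {set word}) j :
  (forall p, p \in W -> weight k.+1 p <= t) -> line_closed k.+1 t W ->
  line_closed k (t - (j == star) * 2 ^ k) (slice W (Ordinal hk) j).
Proof.
move=> hb hW p; rewrite inE => /andP[pW /eqP pj] l lk hw.
have lL : Ordinal hk != l by apply: contraTneq lk => <-; rewrite ltnn.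
have [|q qW /andP[qp qline]] := hW p pW l (ltnW lk).
  move: (hb p pW) hw; rewrite !(weightS _ hk) ffunE (negbTE lL) pj.
  by set c := _ * _; lia.
exists q; last by rewrite qp qline.
by rewrite inE qW (line_off qline lL) pj /=.
Qed.

Lemma line_closed_weight0 k t (W : {set word}) :
  line_closed k t W -> (forall p, p \in W -> weight k p <= t) -> W != set0 ->
  exists2 p, p \in W & weight k p = 0.
Proof.
move=> hW hb /set0Pn[p0 p0W]; have [p pW pmin] := arg_minnP (weight k) p0W.
exists p => //; apply/eqP; apply: contraT; rewrite -lt0n => wpos.
have [l /andP[lk pl]] : exists l : 'I_m, (l < k) && (p l == star).
  apply/existsP; apply: contraTT wpos => /existsPn none.
  by rewrite /weight big1 // => l _; rewrite (negbTE (none l)).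
have [|q qW /andP[qp qline]] := hW p pW l lk; first by rewrite -(eqP pl) set_letter_id hb.
have ql : q l != star.
  by apply: contra qp => /eqP ql; rewrite (line_eq qline) // ql (eqP pl).
have := weight_line k qline; rewrite lk pl (negbTE ql) /= mul1n mul0n addn0 => e.
by have := pmin q qW; have := expn_gt0 2 l; rewrite e; lia.
Qed.

Lemma line_closed_card k t (W : {set word}) : k <= m -> t < 2 ^ k ->
  (forall p, p \in W -> weight k p <= t) -> line_closed k t W -> W != set0 -> t < #|W|.
Proof.
(* Slices at a letter other than r inherit the bound min(t, 2^k - 1), the slice at r
   the bound t - 2^k.  If t >= 2^k, a word of weight 0 and its neighbour along the
   coordinate k lie in two different slices, which together have more than t points. *)
elim: k t W => [|k IH] t W hk ht hb hW W0.
  by move: ht; rewrite expn0 ltnS leqn0 => /eqP->; rewrite card_gt0.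
set L := Ordinal hk.
have big_slice j : slice W L j != set0 ->
    minn (t - (j == star) * 2 ^ k) (2 ^ k - 1) < #|slice W L j|.
  move=> Sj0; apply: (IH _ _ (ltnW hk) _ _ _ Sj0).
  - by have := expn_gt0 2 k; lia.
  - move=> p; rewrite inE => /andP[pW /eqP pj].
    have := weight_lt p (ltnW hk); have := hb p pW; rewrite (weightS _ hk) -/L pj.
    by set c := _ * _; lia.
  - exact: line_closed_le (geq_minl _ _) (slice_line_closed hb hW).
have [p0 p0W w0] := line_closed_weight0 hW hb W0.
have {w0} [wk0 p0L] : weight k p0 = 0 /\ p0 L != star.
  move/eqP: w0; rewrite (weightS _ hk) -/L addn_eq0 muln_eq0 expn_eq0 orbF eqb0.
  by case/andP => /eqP.
have slice_ne (q : word) : q \in W -> slice W L (q L) != set0.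
  by move=> qW; apply/set0Pn; exists q; rewrite inE qW /=.
have := big_slice (p0 L) (slice_ne p0 p0W); rewrite (negbTE p0L) mul0n subn0 => S0.
have sub0 : #|slice W L (p0 L)| <= #|W|.
  by apply/subset_leq_card/subsetP => p; rewrite inE => /andP[].
case: (ltnP t (2 ^ k)) => htk.
  by apply: leq_trans _ sub0; move: S0; rewrite (minn_idPl _) //; lia.
have [|q qW /andP[qp qline]] := hW p0 p0W L (ltnSn k).
  rewrite (weightS _ hk) -/L set_letter_at eqxx mul1n.
  have := weight_line k (mem_line_set_letter p0 L star).
  by rewrite ltnn /= !mul0n !addn0 => <-; rewrite wk0.
have qL : q L != p0 L by apply: contra qp => /eqP /(line_eq qline) ->.
have hP : 2 ^ k <= #|slice W L (p0 L)| by move: S0 htk; lia.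
have hQ : t - 2 ^ k < #|slice W L (q L)|.
  move: (big_slice (q L) (slice_ne q qW)) ht htk; rewrite expnS.
  by case: (q L == star); rewrite ?mul1n ?mul0n; lia.
apply: leq_trans (card_slices W L qL); rewrite addnC.
by apply: leq_trans (leq_add hP hQ); lia.
Qed.

Lemma isolated_point t (W : {set word}) :
  t < 2 ^ m -> W \subset Omega m r t -> W != set0 -> #|W| <= t ->
  exists p l, [/\ p \in W, set_letter p l star \in Omega m r t &
                  forall q, q \in W -> q \in line p l -> q = p].
Proof.
move=> ht WO W0 Wt.
have [/existsP[p /andP[pW /existsP[l /andP[pl /forallP iso]]]] | none] := boolP
  [exists p in W, exists l, (set_letter p l star \in Omega m r t) &&
                            [forall q in W, (q \in line p l) ==> (q == p)]].
  exists p, l; split=> // q qW ql; apply/eqP.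
  by have := iso q; rewrite qW ql.
suff : t < #|W| by rewrite ltnNge Wt.
apply: (line_closed_card (leqnn m) ht _ _ W0) => [p pW | p pW l _ hw].
  by rewrite -mem_Omega // (subsetP WO).
move/existsPn: none => /(_ p); rewrite pW /= => /existsPn/(_ l).
rewrite mem_Omega // hw /= => /forallPn[q]; rewrite !negb_imply => /andP[qW /andP[ql qp]].
by exists q; rewrite ?qp.
Qed.

End Words.

Lemma F2_addrr (a : GF2) : (a + a = 0)%R.
Proof. exact/addrr_pchar2/pchar_Fp. Qed.

Lemma F2_addr_eq0 (a b : GF2) : (a + b == 0)%R = (a == b).
Proof. by rewrite addr_eq0 (oppr_pchar2 (pchar_Fp _)). Qed.

Lemma syndrome_is_linear m r t : linear (@syndrome m r t).
Proof.
move=> a x y; apply/ffunP => c; rewrite !ffunE /= scaler_sumr -big_split /=.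
apply: eq_bigr => b _; rewrite !ffunE mulrDr; congr (_ + _)%R.
by rewrite /GRing.scale /= mulrCA.
Qed.

HB.instance Definition _ m r t :=
  GRing.isLinear.Build _ _ _ _ (@syndrome m r t) (@syndrome_is_linear m r t).

Section Code.

Variables m r t : nat.
Hypothesis ht : t < 2 ^ m.
Local Notation word := (word m r).
Local Notation star := (@ord_max r).
Local Notation coord := (Defs.coord m r t).
Local Notation C := (Ccode m r t).
Local Open Scope ring_scope.

Definition entry k (x : {ffun Defs.coord m r k -> GF2^o}) (w : word) : GF2 :=
  if insub w is Some c then x c else 0.

Lemma entry_val k (x : {ffun Defs.coord m r k -> GF2^o}) c : entry x (val c) = x c.
Proof. by rewrite /entry valK. Qed.

Lemma sum_coord (V : nmodType) (A : {set word}) (F : word -> V) :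
  A \subset Omega m r t -> \sum_(c : coord | val c \in A) F (val c) = \sum_(w in A) F w.
Proof.
move=> AO; rewrite -big_sub_cond; apply: eq_bigl => w.
by rewrite andb_idl // => /(subsetP AO).
Qed.

Lemma Lset_sub_Omega0 p : Lset p \subset Omega m r 0.
Proof. by apply/subsetP => b; rewrite inE mem_Omega0 => /andP[]. Qed.

Lemma Lset_Omega0 p : p \in Omega m r 0 -> Lset p = [set p].
Proof.
rewrite mem_Omega0 => /forallP p0; apply/setP => b; rewrite !inE.
apply/andP/eqP => [[_ /forallP bp]|->].
  by apply/ffunP => l; apply/eqP/(implyP (bp l)); rewrite inE.
by split; apply/forallP => l; rewrite ?p0 ?eqxx ?implybT.
Qed.

Lemma syndromeE x (a : coord) : syndrome x a =
  if val a \in Omega m r 0 then 0 else entry x (val a) + \sum_(b in Lset (val a)) entry x b.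
Proof.
rewrite ffunE; under eq_bigr => c _ do rewrite -[x c]entry_val.
rewrite -(big_sub _ (fun w => Hmat t (val a) w * entry x w)).
case: ifP => a0; first by rewrite big1 // => w _; rewrite /Hmat in_setD a0 mul0r.
have aO := valP a; have LO : val a |: Lset (val a) \subset Omega m r t.
  by rewrite subUset sub1set aO (subset_trans (Lset_sub_Omega0 _) (Omega0_sub _ _ _)).
rewrite (big_setID (val a |: Lset (val a))) /= (setIidPr LO) big_setU1 /=; last first.
  by apply: contraFN a0; apply/subsetP/Lset_sub_Omega0.
rewrite [X in _ + X]big1 ?addr0 => [|w /setDP[_]]; last first.
  by rewrite /Hmat in_setU1 => /norP[/negbTE-> /negbTE->]; rewrite !andbF mul0r.
congr (_ + _); last apply: eq_bigr => w wL; rewrite /Hmat in_setD a0 aO /=.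
- by rewrite eqxx orbT mul1r.
- by rewrite wL (subsetP LO) ?mul1r // setU1r.
Qed.

Lemma CcodeP x : reflect
  (forall w, w \in Omega m r t -> entry x w = \sum_(b in Lset w) entry x b) (x \in C).
Proof.
rewrite memv_ker lfunE /=; apply: (iffP eqP) => [s0 w wO | hx].
  case: (boolP (w \in Omega m r 0)) => w0; first by rewrite Lset_Omega0 // big_set1.
  move/ffunP/(_ (Sub w wO)): s0; rewrite syndromeE /= (negbTE w0).
  by rewrite ffunE => /eqP; rewrite F2_addr_eq0 => /eqP.
apply/ffunP => a; rewrite syndromeE ffunE; case: ifP => // _.
by rewrite -hx ?F2_addrr // (valP a).
Qed.

Lemma line_sub_Omega (p : word) l :
  set_letter p l star \in Omega m r t -> line p l \subset Omega m r t.
Proof.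
rewrite mem_Omega // => hl; apply/subsetP => q ql.
by rewrite mem_Omega // (leq_trans (weight_line_le m ql)).
Qed.

Lemma Lset_set_letter (p : word) l j : j != star ->
  Lset (set_letter p l j) = [set b in Lset (set_letter p l star) | b l == j].
Proof.
move=> jS; apply/setP => b; rewrite !inE -andbA; congr (_ && _).
apply/forallP/andP => [bp | [/forallP bp /eqP bl] i].
  split; last by have := bp l; rewrite !inE set_letter_at jS.
  apply/forallP => i; have := bp i; rewrite !inE !ffunE.
  by case: (i == l) => //=; rewrite eqxx.
have := bp i; rewrite !inE !ffunE; case: (i =P l) => // ->.
by rewrite bl !eqxx implybT.
Qed.

Lemma line_sum x (p : word) l : x \in C -> set_letter p l star \in Omega m r t ->
  \sum_(w in line p l) entry x w = 0.
Proof.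
move=> /CcodeP xC lO; have lineO := subsetP (line_sub_Omega lO).
rewrite big_imset /=; last by move=> ? ? _ _; apply: set_letter_inj.
rewrite (bigD1 star) //= xC ?lineO ?mem_line_set_letter //.
have slice_sum j : j != star -> entry x (set_letter p l j) =
    \sum_(b in Lset (set_letter p l star) | b l == j) entry x b.
  move=> jS; rewrite xC ?lineO ?mem_line_set_letter // Lset_set_letter //.
  by apply: eq_bigl => b; rewrite inE.
rewrite (eq_bigr _ slice_sum) -partition_big ?F2_addrr // => b.
by rewrite inE => /andP[/forallP/(_ l)].
Qed.

Lemma line_recover x (p : word) l : x \in C -> set_letter p l star \in Omega m r t ->
  entry x p = \sum_(w in line p l :\ p) entry x w.
Proof.
move=> xC lO; apply/eqP; rewrite -F2_addr_eq0 -(big_setD1 _ (mem_line_self p l)).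
by rewrite line_sum.
Qed.

Definition line_coords (i : coord) l : {set coord} :=
  [set c | val c \in line (val i) l :\ val i].

Lemma card_line_coords i l : (#|line_coords i l| <= r)%N.
Proof.
rewrite -(card_imset _ val_inj); apply: leq_trans (_ : #|line (val i) l :\ val i| <= r)%N.
  by apply/subset_leq_card/subsetP => w /imsetP[c]; rewrite inE => cA ->.
by have := cardsD1 (val i) (line (val i) l); rewrite mem_line_self card_line add1n => -[<-].
Qed.

Lemma line_coords_recovering i l : set_letter (val i) l star \in Omega m r t ->
  recovering_set C i (line_coords i l).
Proof.
move=> lO; split; first by rewrite inE setD11.
exists (fun=> 1); split=> [|x xC]; first by move=> *; apply: oner_neq0.
rewrite -entry_val (line_recover xC lO) -sum_coord; last first.
  by apply: subset_trans (subsetDl _ _) (line_sub_Omega lO).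
by apply: eq_big => [c|c _]; rewrite ?inE // mul1r entry_val.
Qed.

Definition extend (y : {ffun Defs.coord m r 0 -> GF2^o}) : {ffun coord -> GF2^o} :=
  [ffun b => \sum_(v in Lset (val b)) entry y v].

Lemma extend_is_linear : linear extend.
Proof.
move=> a y z; apply/ffunP => b; rewrite !ffunE scaler_sumr -big_split /=.
apply: eq_bigr => v _; rewrite /entry.
by case: insub => [c|]; rewrite ?ffunE ?scaler0 ?addr0.
Qed.

HB.instance Definition _ := GRing.isLinear.Build _ _ _ _ extend extend_is_linear.

Lemma entry_extend y w : w \in Omega m r t ->
  entry (extend y) w = \sum_(v in Lset w) entry y v.
Proof. by move=> wO; rewrite /entry insubT ffunE. Qed.

Lemma entry_ffun k (f : word -> GF2) w :
  w \in Omega m r k -> entry [ffun c : Defs.coord m r k => f (val c)] w = f w.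
Proof. by move=> wO; rewrite /entry insubT ffunE. Qed.

Lemma extend_code y : extend y \in C.
Proof.
apply/CcodeP => w wO; rewrite entry_extend //; apply: eq_bigr => v vL.
have v0 := subsetP (Lset_sub_Omega0 w) v vL.
by rewrite entry_extend ?(subsetP (Omega0_sub m r t)) // Lset_Omega0 // big_set1.
Qed.

Lemma extend_inj : injective extend.
Proof.
move=> y z yz; apply/ffunP => c; rewrite -!entry_val.
have := congr1 (fun f => entry f (val c)) yz; have c0 := valP c.
by rewrite !entry_extend ?(subsetP (Omega0_sub m r t)) // Lset_Omega0 // !big_set1.
Qed.

Lemma code_extend x : x \in C -> x = extend [ffun c => entry x (val c)].
Proof.
move/CcodeP => xC; apply/ffunP => b; rewrite -entry_val xC ?(valP b) // ffunE.
apply: eq_bigr => v /(subsetP (Lset_sub_Omega0 _)) v0; exact/esym/entry_ffun.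
Qed.

Lemma dim_Ccode : \dim C = #|Omega m r 0|.
Proof.
have -> : C = (linfun extend @: fullv)%VS.
  apply/vspaceP => x; apply/idP/memv_imgP => [xC | [y _ ->]].
    exists [ffun c => entry x (val c)]; first exact: memvf.
    by rewrite lfunE; apply: code_extend.
  by rewrite lfunE extend_code.
rewrite limg_dim_eq ?dimvf; last first.
  by rewrite capfv; apply/eqP/lker0P => y z; rewrite !lfunE; apply: extend_inj.
by rewrite /dim /= card_sig muln1.
Qed.

End Code.

Lemma Ccode_seq_recoverable m r t : t < 2 ^ m -> seq_recoverable (Ccode m r t) r t.
Proof.
move=> ht; apply: seq_recoverable_of_peel => E E0 Et.
have [||| p [l [/imsetP[i iE ->] lO iso]]] := @isolated_point m r t (val @: E) ht.
- by apply/subsetP => _ /imsetP[c _ ->]; apply: valP.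
- by rewrite imset_eq0.
- by rewrite card_imset //; apply: val_inj.
exists i, (line_coords i l); split=> //.
- apply/subsetP => c; rewrite !inE => /andP[ci cl]; apply: contra ci => cE.
  by apply/eqP/iso; rewrite ?imset_f.
- exact: card_line_coords.
- exact: line_coords_recovering.
Qed.

Lemma card_Gamma m r s : #|Gamma m r s| = r ^ (m - #|supp m s|).
Proof.
pose F (l : 'I_m) := if l \in supp m s then pred1 (@ord_max r) else predC1 ord_max.
have -> : #|Gamma m r s| = #|family F|.
  apply: eq_card => a; rewrite inE; apply/eqP/familyP => [aS l | aF].
    by rewrite /F -aS inE; case: eqP => [->|/eqP]; rewrite !inE ?eqxx.
  apply/setP => l; have := aF l; rewrite /F [l \in Uset a]inE.
  by case: ifP => _; rewrite inE; [move/eqP->; rewrite eqxx | move/negbTE].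
rewrite card_family foldrE big_map big_enum /= (bigID (mem (supp m s))) /=.
rewrite big1 => [|l ls]; last by rewrite /F ls card1.
rewrite mul1n (eq_bigr (fun=> r)) => [|l /negbTE ls].
  rewrite prod_nat_const; congr (_ ^ _).
  by rewrite -[LHS](addKn #|supp m s|) cardC card_ord.
by rewrite /F ls cardC1 card_ord.
Qed.

Lemma card_Omega m r t : t < 2 ^ m ->
  #|Omega m r t| = \sum_(s < t.+1) r ^ (m - #|supp m s|).
Proof.
elim: t => [|t IH] ht; first by rewrite /Omega !big_ord1 card_Gamma.
rewrite big_ord_recr -IH ?(ltnW ht) // -card_Gamma /Omega big_ord_recr /=.
rewrite -/(Omega m r t); apply/eqP; rewrite (leq_card_setU _ _).2.
apply/pred0P => p /=; apply/negP => /andP[].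
by rewrite mem_Omega ?(ltnW ht) // mem_Gamma // => le_t /eqP e; rewrite e ltnn in le_t.
Qed.

Lemma card_supp_le m s : #|supp m s| <= m.
Proof. by rewrite -[X in _ <= X](card_ord m) max_card. Qed.

Lemma supp0 m : supp m 0 = set0.
Proof. by apply/setP => l; rewrite !inE div0n. Qed.

Local Open Scope ring_scope.

Theorem theorem2 (r t m : nat) :
  (2 <= r)%N -> (1 <= t)%N -> (0 < m)%N -> (t <= 2 ^ m - 1)%N ->
  exists n : nat,
    [/\ n%:R = (r ^ m)%:R * \sum_(s < t.+1) ((r ^ #|supp m s|)%:R)^-1 :> rat,
        is_SLRC (Ccode m r t) n (r ^ m) r t &
        (r ^ m)%:R / n%:R = (\sum_(s < t.+1) ((r ^ #|supp m s|)%:R)^-1)^-1 :> rat].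
Proof.
move=> r2 _ _ tm; have ht : (t < 2 ^ m)%N by have := expn_gt0 2 m; lia.
have rX_neq0 k : (r ^ k)%:R != 0 :> rat by rewrite pnatr_eq0 expn_eq0; lia.
have n_eq : #|Omega m r t|%:R =
    (r ^ m)%:R * \sum_(s < t.+1) ((r ^ #|supp m s|)%:R)^-1 :> rat.
  rewrite card_Omega // natr_sum mulr_sumr; apply: eq_bigr => s _.
  have -> : (r ^ m = r ^ (m - #|supp m s|) * r ^ #|supp m s|)%N.
    by rewrite -expnD subnK ?card_supp_le.
  by rewrite natrM mulfK.
exists #|Omega m r t|; split=> //.
- split; [exact: card_sig | | exact: Ccode_seq_recoverable].
  by rewrite dim_Ccode card_Omega ?expn_gt0 // big_ord1 supp0 cards0 subn0.
- by rewrite n_eq invfM mulrA mulfV ?mul1r.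
Qed.
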